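(* Let $n\ge3$, $q\in\{1,\dots,n-1\}$ and $k=\gcd(n,q)$. For $r\in\{1,\dots,n-1\}$ and $x,y\in\mathbb R^n$ define the biquadratic form $$B_{\Phi^{(n,r)}}(x;y)=(n-2)\sum_{i=1}^n x_i^2y_i^2+\sum_{i=1}^n x_{\sigma_r(i)}^2y_i^2-2\sum_{1\le i<j\le n}x_iy_ix_jy_j,$$ regarded as an element of $\mathcal P_{2n,4}$. Then $B_{\Phi^{(n,q)}}$ is extremal in $\mathcal P_{2n,4}$ if and only if $B_{\Phi^{(n,k)}}$ is extremal in $\mathcal P_{2n,4}$.
   Context: $\sigma_r(i)\equiv i+r\pmod n$ with values in $\{1,\dots,n\}$. $\mathcal P_{m,d}$ is the convex cone of positive semidefinite real forms in $m$ variables of degree $d$; these forms $B_{\Phi^{(n,r)}}$ are positive semidefinite. A form $F\in\mathcal P_{m,d}$ is extremal if $F=F_1+F_2$ with $F_i\in\mathcal P_{m,d}$ implies $F_i=\lambda_iF$ with $\lambda_i\ge0$. *)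

From HB Require Import structures.
From mathcomp Require Import all_boot all_order all_algebra.
From mathcomp Require Import Rstruct.
From mathcomp Require Import mpoly.
From Stdlib Require Import Rdefinitions.
Set Implicit Arguments. Unset Strict Implicit. Unset Printing Implicit Defensive.
Import Order.TTheory GRing.Theory Num.Theory.
Local Open Scope ring_scope.

Definition psd_form (m d : nat) (F : {mpoly R[m]}) : Prop :=
  F \is d.-homog /\ forall v : 'I_m -> R, 0 <= F.@[v].

Definition extremal (m d : nat) (F : {mpoly R[m]}) : Prop :=
  psd_form d F /\
  forall F1 F2 : {mpoly R[m]}, psd_form d F1 -> psd_form d F2 -> F = F1 + F2 ->
    exists l1 l2 : R, [/\ 0 <= l1, 0 <= l2, F1 = l1 *: F & F2 = l2 *: F].

(* variables: x_i = X_(i) and y_i = X_(n+i), indices 0-based *)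
Definition xv (n : nat) (i : 'I_n) : {mpoly R[n + n]} := 'X_(lshift n i).
Definition yv (n : nat) (i : 'I_n) : {mpoly R[n + n]} := 'X_(rshift n i).

Lemma ord_pos (n : nat) (i : 'I_n) : leq 1 n.
Proof. by case: n i => [[]|]. Qed.

(* sigma_r(i) = i + r mod n (0-based version of the paper's 1-based one) *)
Definition sigma (n r : nat) (i : 'I_n) : 'I_n :=
  Ordinal (ltn_pmod (i + r) (ord_pos i)).

Definition Bform (n r : nat) : {mpoly R[n + n]} :=
  (n - 2)%:R * (\sum_(i < n) xv i ^+ 2 * yv i ^+ 2)
  + (\sum_(i < n) xv (sigma r i) ^+ 2 * yv i ^+ 2)
  - 2%:R * (\sum_(i < n) \sum_(j < n | ltn i j) xv i * yv i * xv j * yv j).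

From HB Require Import structures.
From mathcomp Require Import all_boot all_order all_algebra.
From mathcomp Require Import Rstruct.
From mathcomp Require Import fingroup perm mpoly.
From Stdlib Require Import Rdefinitions.
Set Implicit Arguments. Unset Strict Implicit. Unset Printing Implicit Defensive.
Import Order.TTheory GRing.Theory Num.Theory.

(* The map pi(i) = (i mod k + (i div k) q) mod n is a
   permutation of Z/n (because n/k and q/k are coprime) and it conjugates
   the rotation sigma_k into sigma_q. Renaming x_i -> x_(pi i) and
   y_i -> y_(pi i) therefore turns B_(n,k) into B_(n,q); the cross term is
   symmetric in the indices, and a permutation of the variables is an
   automorphism of the cone P_(2n,4), so it preserves extremality. *)

Lemma coprime_modMr_inj m c a b : coprime m c -> a < m -> b < m ->
  a * c = b * c %[mod m] -> a = b.
Proof.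
move=> cop_mc; wlog le_ba : a b / b <= a.
  move=> IH a_lt b_lt eq_ab; case: (leqP b a) => [|/ltnW] le.
    exact: IH.
  exact/esym/IH.
move=> a_lt _ /eqP; rewrite eqn_mod_dvd ?leq_mul2r ?le_ba ?orbT //.
rewrite -mulnBl Gauss_dvdl // => dvd_m; apply/eqP; rewrite eqn_leq le_ba andbT.
rewrite -subn_eq0; apply: contraLR dvd_m; rewrite -lt0n => sub_gt0.
by rewrite gtnNdvd // (leq_ltn_trans (leq_subr _ _)).
Qed.

Lemma coprime_divn_gcd n q : 0 < n -> coprime (n %/ gcdn n q) (q %/ gcdn n q).
Proof.
move=> n_gt0; have k_gt0 : 0 < gcdn n q by rewrite gcdn_gt0 n_gt0.
rewrite /coprime -(eqn_pmul2r k_gt0) mul1n muln_gcdl.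
by rewrite !divnK ?dvdn_gcdl ?dvdn_gcdr.
Qed.

Section RotationConjugation.
Variables n k q : nat.
Hypotheses (k_gt0 : 0 < k) (k_dvd_n : k %| n) (k_dvd_q : k %| q).
Hypothesis coprime_quo : coprime (n %/ k) (q %/ k).

Definition rot_conj_fun (i : 'I_n) : 'I_n :=
  Ordinal (ltn_pmod (i %% k + i %/ k * q) (ord_pos i)).

Lemma rot_conj_fun_inj : injective rot_conj_fun.
Proof.
move=> i j /(congr1 val) /= eq_ij.
have q_eq : q = q %/ k * k by rewrite divnK.
have n_eq : n = n %/ k * k by rewrite divnK.
have eq_mod_k : i %% k = j %% k.
  move: (congr1 (modn^~ k) eq_ij) => /=.
  by rewrite !modn_dvdm // q_eq !mulnA !(addnC (_ %% k)) !modnMDl !modn_mod.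
move: eq_ij; rewrite eq_mod_k => /eqP; rewrite eqn_modDl => /eqP eq_quo.
have quo_lt (l : 'I_n) : l %/ k < n %/ k by rewrite ltn_divLR // -n_eq.
suff eq_div : i %/ k = j %/ k.
  by apply: val_inj; rewrite /= (divn_eq i k) (divn_eq j k) eq_div eq_mod_k.
apply: (coprime_modMr_inj coprime_quo (quo_lt i) (quo_lt j)).
apply/eqP; rewrite -(eqn_pmul2r k_gt0) !muln_modl // -n_eq -!mulnA -q_eq.
by rewrite eq_quo.
Qed.

Definition rot_conj : 'S_n := perm rot_conj_fun_inj.

Lemma rot_conjE i : rot_conj (sigma k i) = sigma q (rot_conj i).
Proof.
apply: val_inj; rewrite !permE /=.
set j := (i + k) %% n.
have j_mod : j %% k = i %% k by rewrite /j modn_dvdm // modnDr.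
rewrite j_mod modnDml -addnA; apply/eqP; rewrite eqn_modDl; apply/eqP.
have j_quo : k * (j %/ k) = k * (i %/ k).+1 %[mod n].
  apply/eqP; rewrite -(eqn_modDr (i %% k)).
  rewrite [k * (j %/ k)]mulnC -{1}j_mod -divn_eq mulnSr -addnA (addnC k) addnA.
  by rewrite [k * _]mulnC -divn_eq /j modn_mod.
have -> : q = k * (q %/ k) by rewrite mulnC divnK.
rewrite mulnA (mulnC (j %/ k)) -modnMml j_quo modnMml.
by rewrite mulnSr mulnDl mulnA (mulnC k).
Qed.

End RotationConjugation.

Local Open Scope ring_scope.

Section VariablePermutation.
Variable m : nat.
Implicit Types (p F : {mpoly R[m]}) (s : 'S_m).

Lemma msym_XU s i : msym s ('X_i : {mpoly R[m]}) = 'X_(s i).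
Proof. by rewrite /msym mmapX mmap1U. Qed.

Lemma meval_msym s p v : (msym s p).@[v] = p.@[fun i => v (s i)].
Proof.
rewrite -[msym s p]comp_mpoly_id msym_mPo comp_mpoly_meval.
by apply: meval_eq => i; rewrite !tnth_mktuple mevalXU.
Qed.

Lemma dhomog_msym d s p : p \is d.-homog -> msym s p \is d.-homog.
Proof. by rewrite !homog_piE -msym_pihomog => /eqP ->. Qed.

Lemma psd_form_msym d s p : psd_form d p -> psd_form d (msym s p).
Proof.
case=> homog_p p_ge0; split; first exact: dhomog_msym.
by move=> v; rewrite meval_msym.
Qed.

Lemma msymK s : cancel (@msym m R s) (msym s^-1).
Proof. by move=> p; rewrite -msymMm mulgV msym1m. Qed.

Lemma msymKV s : cancel (@msym m R s^-1) (msym s).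
Proof. by move=> p; rewrite -msymMm mulVg msym1m. Qed.

Lemma extremal_msym d s F : extremal d F -> extremal d (msym s F).
Proof.
case=> psd_F extF; split; first exact: psd_form_msym.
move=> F1 F2 psd_F1 psd_F2 eqF.
have eqF' : F = msym s^-1 F1 + msym s^-1 F2 by rewrite -msymD -eqF msymK.
have [l1 [l2 [l1_ge0 l2_ge0 eqF1 eqF2]]] :=
  extF _ _ (psd_form_msym s^-1 psd_F1) (psd_form_msym s^-1 psd_F2) eqF'.
by exists l1, l2; split; rewrite // -msymZ -?eqF1 -?eqF2 msymKV.
Qed.

Lemma extremal_msymE d s F : extremal d (msym s F) <-> extremal d F.
Proof.
split=> [|]; last exact: extremal_msym.
by move=> /(extremal_msym s^-1); rewrite msymK.
Qed.

End VariablePermutation.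

Lemma sum_ltn_pairs (T : comPzRingType) n (a : 'I_n -> T) :
  2%:R * (\sum_(i < n) \sum_(j < n | ltn i j) a i * a j)
  = (\sum_(i < n) a i) ^+ 2 - \sum_(i < n) a i ^+ 2.
Proof.
have split_row (i : 'I_n) : \sum_(j < n) a i * a j =
    \sum_(j < n | ltn i j) a i * a j + a i ^+ 2 + \sum_(j < n | ltn j i) a i * a j.
  rewrite [LHS](bigID (fun j : 'I_n => ltn i j)) -addrA /=; congr (_ + _).
  rewrite [LHS](bigD1 i) ?ltnn //= expr2; congr (_ + _); apply: eq_bigl => j.
  by rewrite -leqNgt ltn_neqAle -val_eqE eq_sym andbC.
have lower_upper : \sum_(i < n) \sum_(j < n | ltn j i) a i * a j
                 = \sum_(i < n) \sum_(j < n | ltn i j) a i * a j.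
  by rewrite (exchange_big_dep xpredT) //=; apply: eq_bigr => i _;
     apply: eq_bigr => j _; rewrite mulrC.
have square : (\sum_(i < n) a i) ^+ 2 = \sum_(i < n) \sum_(j < n) a i * a j.
  by rewrite expr2 mulr_suml; apply: eq_bigr => i _; rewrite mulr_sumr.
rewrite square (eq_bigr _ (fun i _ => split_row i)) !big_split /= lower_upper.
by rewrite mulr2n mulrDl mul1r addrAC addrK.
Qed.

Lemma sum_ltn_pairs_perm (T : comPzRingType) n (a : 'I_n -> T) (s : 'S_n) :
  2%:R * (\sum_(i < n) \sum_(j < n | ltn i j) a (s i) * a (s j))
  = 2%:R * (\sum_(i < n) \sum_(j < n | ltn i j) a i * a j).
Proof.
rewrite (sum_ltn_pairs (fun i => a (s i))) sum_ltn_pairs.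
by rewrite [\sum_i a i](reindex_perm s) [\sum_i a i ^+ 2](reindex_perm s).
Qed.

Section BothBlocks.
Variables (n : nat) (pi : 'S_n).

Definition perm_xy_fun (i : 'I_(n + n)) : 'I_(n + n) :=
  unsplit (match split i with inl a => inl (pi a) | inr b => inr (pi b) end).

Lemma perm_xy_fun_inj : injective perm_xy_fun.
Proof.
move=> i j /(can_inj (@unsplitK n n)) eq_ij; apply: (can_inj (@splitK n n)).
by move: eq_ij; case: (split i); case: (split j) => // a b [] /perm_inj ->.
Qed.

Definition perm_xy : 'S_(n + n) := perm perm_xy_fun_inj.

Lemma msym_xv i : msym perm_xy (xv i) = xv (pi i).
Proof. by rewrite /xv msym_XU permE /perm_xy_fun (unsplitK (inl i)). Qed.

Lemma msym_yv i : msym perm_xy (yv i) = yv (pi i).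
Proof. by rewrite /yv msym_XU permE /perm_xy_fun (unsplitK (inr i)). Qed.

Lemma msym_Bform k q : (forall i, pi (sigma k i) = sigma q (pi i)) ->
  msym perm_xy (Bform n k) = Bform n q.
Proof.
move=> pi_sigma; rewrite /Bform rmorphB rmorphD !rmorphM !rmorph_nat !rmorph_sum /=.
congr (_ * _ + _ - _).
- rewrite [RHS](reindex_perm pi); apply: eq_bigr => i _.
  by rewrite rmorphM !rmorphXn /= msym_xv msym_yv.
- rewrite [RHS](reindex_perm pi); apply: eq_bigr => i _.
  by rewrite rmorphM !rmorphXn /= msym_xv msym_yv pi_sigma.
pose a (i : 'I_n) := xv i * yv i.
have cross (f : 'I_n -> 'I_n) : \sum_(i < n) \sum_(j < n | ltn i j)
    xv (f i) * yv (f i) * xv (f j) * yv (f j)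
    = \sum_(i < n) \sum_(j < n | ltn i j) a (f i) * a (f j).
  by apply: eq_bigr => i _; apply: eq_bigr => j _; rewrite /a !mulrA.
rewrite (cross id) -(sum_ltn_pairs_perm a pi) -(cross pi).
congr (_ * _); apply: eq_bigr => i _; rewrite rmorph_sum; apply: eq_bigr => j _.
by rewrite !rmorphM /= !msym_xv !msym_yv.
Qed.

End BothBlocks.

Theorem proposition4 (n q : nat) :
  leq 3 n -> leq 1 q -> leq q (n - 1) ->
  (extremal 4 (Bform n q) <-> extremal 4 (Bform n (gcdn n q))).
Proof.
move=> n_ge3 _ _; set k := gcdn n q.
have n_gt0 : leq 1 n := ltnW (ltnW n_ge3).
have k_gt0 : leq 1 k by rewrite gcdn_gt0 n_gt0.
have pi_sigma := rot_conjE k_gt0 (dvdn_gcdl n q) (dvdn_gcdr n q)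
  (coprime_divn_gcd q n_gt0).
by rewrite -(msym_Bform pi_sigma) extremal_msymE.
Qed.
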